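(* Let $n,m\ge 5$ be integers with $m\equiv 1\pmod 4$ and $n\equiv 1\pmod 4$. Then $\gamma_t(C_n\times C_m)\le\frac{(n+1)(m+1)}{4}$ and $\gamma_p(C_n\times C_m)\le\frac{(n+1)(m+1)}{4}+1$.
   Context: All graphs are finite, simple and undirected. $C_n$ denotes the cycle of order $n$ and $G\times H$ the Cartesian product of graphs. For a graph $G$ without isolated vertices: a set $D\subseteq V(G)$ is a total dominating set if every vertex of $G$ (including those in $D$) has a neighbour in $D$; $\gamma_t(G)$ is the minimum size of a total dominating set. A set $D\subseteq V(G)$ is a paired dominating set if every vertex outside $D$ has a neighbour in $D$ and the induced subgraph $G[D]$ has a perfect matching; $\gamma_p(G)$ is the minimum size of a paired dominating set. *)

From mathcomp Require Import all_boot.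
Set Implicit Arguments. Unset Strict Implicit. Unset Printing Implicit Defensive.

Section Graph.
Variable T : finType.
Variable adj : rel T.

Definition total_dominating (D : {set T}) : bool :=
  [forall v, [exists u in D, adj v u]].

Definition dominating (D : {set T}) : bool :=
  [forall v, (v \in D) || [exists u in D, adj v u]].

Definition perfect_matching_in (D : {set T}) (M : {set {set T}}) : bool :=
  [&& [forall e in M, [exists u, exists v,
          [&& e == [set u; v], u != v, adj u v, u \in D & v \in D]]],
      trivIset M & cover M == D].

Definition paired_dominating (D : {set T}) : bool :=
  dominating D && [exists M, perfect_matching_in D M].

Definition min_card (P : pred {set T}) : nat :=
  \big[minn/#|T|]_(D : {set T} | P D) #|D|.

Definition gamma_t : nat := min_card total_dominating.
Definition gamma_p : nat := min_card paired_dominating.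
End Graph.

Definition cycle_adj (n : nat) : rel 'I_n :=
  fun i j => (j == (i + 1) %% n :> nat) || (i == (j + 1) %% n :> nat).
Arguments cycle_adj n : clear implicits.

Definition cart_adj (A B : finType) (ea : rel A) (eb : rel B) : rel (A * B) :=
  fun x y => ((x.1 == y.1) && eb x.2 y.2) || ((x.2 == y.2) && ea x.1 y.1).

Definition CnCm_adj (n m : nat) : rel ('I_n * 'I_m) :=
  cart_adj (cycle_adj n) (cycle_adj m).
Arguments CnCm_adj n m : clear implicits.

From HB Require Import structures.
From mathcomp Require Import all_boot zify.
Set Implicit Arguments. Unset Strict Implicit. Unset Printing Implicit Defensive.

(* Both bounds come from explicit periodic patterns.  Label the vertices of C_n
   by a cyclic word made of q copies of a block followed by a final segment, all
   pieces starting with the same letter, so that the letters of adjacent vertices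
   are adjacent in the block or in the final segment.  A set of letter pairs
   selects the cells of C_n x C_m whose (row letter, column letter) is selected.
   The letters of the four neighbours of a cell are constrained only through
   these local successor relations, so the selected set is (totally) dominating,
   resp. has a perfect matching pairing every cell with a prescribed neighbour,
   as soon as a finite check on letter pairs succeeds; the checks are decided by
   computation.  The size of the set is bilinear in the numbers q, q' of blocks.
   For total domination the block is 0123 and the final segment 01234
   (n = 4q + 5); for paired domination the block is 01234567 and the final
   segment is 01238 when n = 5 (mod 8) and 012345689 when n = 1 (mod 8). *)

Lemma min_card_le (T : finType) (P : pred {set T}) (D : {set T}) :
  P D -> min_card P <= #|D|.
Proof.
move=> PD; rewrite /min_card.
have : D \in index_enum {set T} by rewrite mem_index_enum.
elim: (index_enum _) => [//|A r IH]; rewrite big_cons inE.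
case/orP=> [/eqP <-|/IH le_D]; first by rewrite PD geq_minl.
by case: ifP => _ //; rewrite geq_min le_D orbT.
Qed.

Section PerfectMatchingOfInvolution.
Variables (T : finType) (adj : rel T) (D : {set T}) (f : T -> T).
Hypotheses (f_in : {in D, forall x, f x \in D}) (fK : {in D, involutive f}).
Hypotheses (f_neq : {in D, forall x, f x != x}) (f_adj : {in D, forall x, adj x (f x)}).

Definition pairs_of : {set {set T}} := [set [set x; f x] | x in D].

Lemma perfect_matching_of_involution : perfect_matching_in adj D pairs_of.
Proof.
apply/and3P; split.
- apply/forallP => A; apply/implyP => /imsetP[x Dx ->].
  apply/existsP; exists x; apply/existsP; exists (f x).
  by rewrite eqxx eq_sym f_neq // f_adj // Dx f_in.
- have pairE x y : x \in D -> y \in [set x; f x] -> [set x; f x] = [set y; f y].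
    by move=> Dx /set2P[->|->] //; rewrite fK // setUC.
  apply/trivIsetP => _ _ /imsetP[x Dx ->] /imsetP[y Dy ->].
  apply: contraR; rewrite -setI_eq0 => /set0Pn[z /setIP[xz yz]].
  by rewrite (pairE _ _ Dx xz) (pairE _ _ Dy yz).
- apply/eqP/setP => z; apply/bigcupP/idP => [[_ /imsetP[x Dx ->] /set2P[]->]|Dz].
  + by [].
  + exact: f_in.
  by exists [set z; f z]; [apply: imset_f | rewrite set21].
Qed.

End PerfectMatchingOfInvolution.

Lemma cycle_nth_ordS (T : Type) (x0 : T) (e : rel T) (s : seq T) n (i : 'I_n) :
  size s = n -> cycle e s -> e (nth x0 s i) (nth x0 s (ordS i)).
Proof.
move=> sz_s; subst n; case: s i => [[] //|x p] [k lt_k] /=.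
move=> /(pathP x0)/(_ k); rewrite size_rcons lt_k -rcons_cons !nth_rcons lt_k => /(_ isT).
move: lt_k; rewrite ltnS leq_eqVlt => /orP[/eqP ->|lt_kp]; first by rewrite ltnn eqxx modnn.
by rewrite lt_kp modn_small.
Qed.

Lemma cycle_nth_ord_pred (T : Type) (x0 : T) (e : rel T) (s : seq T) n (i : 'I_n) :
  size s = n -> cycle e s -> e (nth x0 s (ord_pred i)) (nth x0 s i).
Proof. by move=> sz_s /(cycle_nth_ordS x0 (ord_pred i) sz_s); rewrite ord_predK. Qed.

Lemma cycle_cat_cons (T : Type) (e : rel T) x p r :
  cycle e (x :: p) -> cycle e (x :: r) -> cycle e (x :: p ++ x :: r).
Proof.
by rewrite /= rcons_cat rcons_cons cat_path rcons_path => /andP[-> /= ->].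
Qed.

Lemma cycle_flatten_nseq (T : Type) (e : rel T) x b t q :
  cycle e (x :: b) -> cycle e (x :: t) -> cycle e (flatten (nseq q (x :: b)) ++ x :: t).
Proof.
move=> cyc_b cyc_t; elim: q => [//|q IHq] /=.
by rewrite -catA; case: q IHq => [|q] /= IHq; apply: cycle_cat_cons.
Qed.

Record scheme := Scheme { block : seq nat; final : seq nat }.

Definition word (S : scheme) (q : nat) : seq nat := flatten (nseq q (block S)) ++ final S.

Definition letters (S : scheme) : seq nat := block S ++ final S.

Definition cycle_edge (s : seq nat) : rel nat := fun x y => (x, y) \in zip s (rot 1 s).

Definition letter_succ (S : scheme) : rel nat :=
  fun x y => cycle_edge (block S) x y || cycle_edge (final S) x y.

Definition scheme_ok (S : scheme) : bool :=
  [&& block S != [::], final S != [::], head 0 (block S) == head 0 (final S),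
      cycle (letter_succ S) (block S) & cycle (letter_succ S) (final S)].

Lemma size_word S q : size (word S q) = q * size (block S) + size (final S).
Proof. by rewrite size_cat size_flatten /shape map_nseq sumn_nseq mulnC. Qed.

Lemma mem_word S q : {subset word S q <= letters S}.
Proof.
move=> x; rewrite !mem_cat => /orP[/flattenP[_ /nseqP[-> _] ->] //|->].
exact: orbT.
Qed.

Lemma cycle_word S q : scheme_ok S -> cycle (letter_succ S) (word S q).
Proof.
rewrite /scheme_ok /word; case: S => [[|x b] [|y t]] //= /and3P[/eqP <-].
exact: cycle_flatten_nseq.
Qed.

Lemma ordS_neq n (i : 'I_n) : 1 < n -> ordS i != i.
Proof.
move=> n_gt1; apply/eqP => /(congr1 val) /=; have := ltn_ord i.
rewrite leq_eqVlt => /orP[/eqP e_in | lt_in]; first by rewrite e_in modnn; lia.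
by rewrite modn_small //; lia.
Qed.

Lemma ord_pred_neq n (i : 'I_n) : 1 < n -> ord_pred i != i.
Proof. by move=> n_gt1; rewrite -(inj_eq (@ordS_inj n)) ord_predK eq_sym ordS_neq. Qed.

Lemma cycle_adj_ordS n (i : 'I_n) : cycle_adj n i (ordS i).
Proof. by rewrite /cycle_adj /= addn1 eqxx. Qed.

Lemma cycle_adj_ord_pred n (i : 'I_n) : cycle_adj n i (ord_pred i).
Proof.
apply/orP; right; rewrite addn1.
by have /(congr1 val) /= -> := ord_predK i.
Qed.

Inductive dir := Down | Up | Right | Left.

Definition dir_code (d : dir) : nat :=
  match d with Down => 0 | Up => 1 | Right => 2 | Left => 3 end.
Definition code_dir (k : nat) : dir :=
  match k with 0 => Down | 1 => Up | 2 => Right | _ => Left end.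
Lemma dir_codeK : cancel dir_code code_dir. Proof. by case. Qed.
HB.instance Definition _ := Equality.copy dir (can_type dir_codeK).

Definition flip (d : dir) : dir :=
  match d with Down => Up | Up => Down | Right => Left | Left => Right end.

Definition step n m (d : dir) (x : 'I_n * 'I_m) : 'I_n * 'I_m :=
  match d with
  | Down => (ordS x.1, x.2) | Up => (ord_pred x.1, x.2)
  | Right => (x.1, ordS x.2) | Left => (x.1, ord_pred x.2)
  end.

Lemma stepK n m d (x : 'I_n * 'I_m) : step (flip d) (step d x) = x.
Proof. by case: d; case: x => r c /=; rewrite ?ordSK ?ord_predK. Qed.

Lemma adj_step n m d (x : 'I_n * 'I_m) : CnCm_adj n m x (step d x).
Proof.
rewrite /CnCm_adj /cart_adj; case: d => /=; rewrite eqxx /=.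
- by rewrite cycle_adj_ordS orbT.
- by rewrite cycle_adj_ord_pred orbT.
- by rewrite cycle_adj_ordS.
- by rewrite cycle_adj_ord_pred.
Qed.

Lemma step_neq n m d (x : 'I_n * 'I_m) : 1 < n -> 1 < m -> step d x != x.
Proof.
move=> n_gt1 m_gt1; case: d; case: x => r c; rewrite /= xpair_eqE ?eqxx ?andbT.
- exact: ordS_neq.
- exact: ord_pred_neq.
- exact: ordS_neq.
- exact: ord_pred_neq.
Qed.

Lemma big_nth_ord (T : Type) (x0 : T) (F : T -> nat) (s : seq T) n :
  size s = n -> \sum_(i < n) F (nth x0 s i) = \sum_(a <- s) F a.
Proof. by move=> <-; rewrite (big_nth x0) big_mkord. Qed.

Definition succs (e : rel nat) (L : seq nat) (a : nat) : seq nat := [seq b <- L | e a b].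
Definition preds (e : rel nat) (L : seq nat) (a : nat) : seq nat := [seq b <- L | e b a].

Definition lookup (tbl : seq (nat * nat * dir)) (c : nat * nat) : option dir :=
  ohead [seq p.2 | p <- tbl & p.1 == c].

Definition in_table (tbl : seq (nat * nat * dir)) : pred (nat * nat) :=
  fun c => lookup tbl c != None.

Lemma lookup_mem tbl c d : lookup tbl c = Some d -> (c, d) \in tbl.
Proof.
rewrite /lookup; case E: [seq _ | _ <- _ & _] => [//|d' r] /= [<-].
have /mapP[[c' d''] + ->] : d' \in [seq p.2 | p <- tbl & p.1 == c] by rewrite E mem_head.
by rewrite mem_filter /= => /andP[/eqP ->].
Qed.

Section GridPattern.
Variables (S S' : scheme).

Definition letter_step (d : dir) (c : nat * nat) : seq (nat * nat) :=
  match d with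
  | Down => [seq (a, c.2) | a <- succs (letter_succ S) (letters S) c.1]
  | Up => [seq (a, c.2) | a <- preds (letter_succ S) (letters S) c.1]
  | Right => [seq (c.1, b) | b <- succs (letter_succ S') (letters S') c.2]
  | Left => [seq (c.1, b) | b <- preds (letter_succ S') (letters S') c.2]
  end.

Definition domination_check (closed : bool) (P : pred (nat * nat)) : bool :=
  all (fun a => all (fun b => let c := (a, b) in
    all (fun c1 => all (fun c2 => all (fun c3 => all (fun c4 =>
      [|| closed && P c, P c1, P c2, P c3 | P c4])
    (letter_step Left c)) (letter_step Right c)) (letter_step Up c)) (letter_step Down c))
  (letters S')) (letters S).

(* An entry (c, d) matches every cell with letter pair c to its neighbour in
   direction d; the check forces that neighbour to be matched back. *)
Definition pairing_check (tbl : seq (nat * nat * dir)) : bool :=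
  all (fun p => all (fun c => lookup tbl c == Some (flip p.2)) (letter_step p.2 p.1)) tbl.

Variables (n m : nat) (s s' : seq nat).
Hypotheses (size_s : size s = n) (size_s' : size s' = m).
Hypotheses (cycle_s : cycle (letter_succ S) s) (cycle_s' : cycle (letter_succ S') s').
Hypotheses (sub_s : {subset s <= letters S}) (sub_s' : {subset s' <= letters S'}).

Definition label (x : 'I_n * 'I_m) : nat * nat := (nth 0 s x.1, nth 0 s' x.2).

Lemma label_letters x : (label x).1 \in letters S /\ (label x).2 \in letters S'.
Proof. by split; [apply/sub_s/mem_nth; rewrite size_s | apply/sub_s'/mem_nth; rewrite size_s']. Qed.

Lemma label_step d x : label (step d x) \in letter_step d (label x).
Proof.
have [Lx Lx'] := label_letters (step d x).
case: d Lx Lx' => /= Lx Lx'; apply/mapP; (eexists; last reflexivity).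
all: rewrite mem_filter ?Lx ?Lx' andbT.
- exact: cycle_nth_ordS.
- exact: cycle_nth_ord_pred.
- exact: cycle_nth_ordS.
- exact: cycle_nth_ord_pred.
Qed.

Definition pattern_set (P : pred (nat * nat)) : {set 'I_n * 'I_m} := [set x | P (label x)].

Lemma pattern_dominates closed P : domination_check closed P ->
  forall x, (closed && (x \in pattern_set P)) || [exists y in pattern_set P, CnCm_adj n m x y].
Proof.
move=> chk x; have [La Lb] := label_letters x.
have nbr d : P (label (step d x)) -> [exists y in pattern_set P, CnCm_adj n m x y].
  by move=> Pd; apply/existsP; exists (step d x); rewrite inE Pd adj_step.
move/allP: chk => /(_ _ La)/allP/(_ _ Lb)/allP/(_ _ (label_step Down x)).
move=> /allP/(_ _ (label_step Up x))/allP/(_ _ (label_step Right x)).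
move=> /allP/(_ _ (label_step Left x)); rewrite inE.
by case/orP=> [->//|/or4P[]/nbr->]; rewrite orbT.
Qed.

Lemma pattern_total_dominating P : domination_check false P ->
  total_dominating (CnCm_adj n m) (pattern_set P).
Proof. by move=> chk; apply/forallP => x; apply: pattern_dominates chk x. Qed.

Lemma pattern_dominating P : domination_check true P -> dominating (CnCm_adj n m) (pattern_set P).
Proof. by move=> chk; apply/forallP => x; apply: pattern_dominates chk x. Qed.

Section Pairing.
Variable tbl : seq (nat * nat * dir).
Hypothesis pairing_ok : pairing_check tbl.

Definition partner (x : 'I_n * 'I_m) : 'I_n * 'I_m :=
  if lookup tbl (label x) is Some d then step d x else x.

Lemma partner_step x : x \in pattern_set (in_table tbl) ->
  exists d, partner x = step d x /\ lookup tbl (label (step d x)) = Some (flip d).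
Proof.
rewrite inE /in_table /partner; case E: (lookup _ _) => [d|//] _; exists d; split=> //.
move/allP: pairing_ok => /(_ _ (lookup_mem E))/allP/(_ _ (label_step d x)).
by move/eqP.
Qed.

Lemma pattern_paired_dominating : 1 < n -> 1 < m -> domination_check true (in_table tbl) ->
  paired_dominating (CnCm_adj n m) (pattern_set (in_table tbl)).
Proof.
move=> n_gt1 m_gt1 chk; rewrite /paired_dominating pattern_dominating //=.
apply/existsP; exists (pairs_of (pattern_set (in_table tbl)) partner).
apply: perfect_matching_of_involution => x /partner_step[d [-> lookup_d]].
- by rewrite inE /in_table lookup_d.
- by rewrite /partner lookup_d stepK.
- exact: step_neq.
- exact: adj_step.
Qed.

End Pairing.

Definition weight (P : pred (nat * nat)) (s s' : seq nat) : nat :=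
  \sum_(a <- s) \sum_(b <- s') P (a, b).

Lemma card_pattern_set P : #|pattern_set P| = weight P s s'.
Proof.
rewrite /weight -(big_nth_ord 0 (fun a => \sum_(b <- s') P (a, b)) size_s).
under eq_bigr do rewrite -(big_nth_ord 0 (fun b => P (_, b)) size_s').
rewrite pair_big /= -sum1_card big_mkcond /=.
by apply: eq_bigr => x _; rewrite inE; case: (P _).
Qed.

End GridPattern.

Lemma sum_word (F : nat -> nat) S q :
  \sum_(a <- word S q) F a = q * \sum_(a <- block S) F a + \sum_(a <- final S) F a.
Proof. by rewrite big_cat big_flatten big_nseq iter_addn_0 mulnC. Qed.

Lemma weight_word P S S' q q' :
  weight P (word S q) (word S' q') =
  q * q' * weight P (block S) (block S') + q * weight P (block S) (final S')
  + q' * weight P (final S) (block S') + weight P (final S) (final S').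
Proof.
rewrite /weight; under eq_bigr do rewrite sum_word.
by rewrite sum_word !big_split -!big_distrr /= !mulnDr !mulnA !addnA.
Qed.

Section WordPatterns.
Variables (S S' : scheme) (q q' : nat).
Hypotheses (okS : scheme_ok S) (okS' : scheme_ok S').

Lemma gamma_t_word P : domination_check S S' false P ->
  gamma_t (CnCm_adj (size (word S q)) (size (word S' q'))) <= weight P (word S q) (word S' q').
Proof.
move=> chk; rewrite -(card_pattern_set (erefl _) (erefl _)); apply: min_card_le.
exact: (pattern_total_dominating (erefl _) (erefl _) (cycle_word _ okS) (cycle_word _ okS')
          (@mem_word _ _) (@mem_word _ _) chk).
Qed.

Lemma gamma_p_word tbl : 1 < size (word S q) -> 1 < size (word S' q') ->
  domination_check S S' true (in_table tbl) -> pairing_check S S' tbl ->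
  gamma_p (CnCm_adj (size (word S q)) (size (word S' q')))
    <= weight (in_table tbl) (word S q) (word S' q').
Proof.
move=> n_gt1 m_gt1 chk pair_chk; rewrite -(card_pattern_set (erefl _) (erefl _)).
apply: min_card_le.
exact: (pattern_paired_dominating (erefl _) (erefl _) (cycle_word _ okS) (cycle_word _ okS')
          (@mem_word _ _) (@mem_word _ _) pair_chk n_gt1 m_gt1 chk).
Qed.

End WordPatterns.

Definition scheme4 : scheme := Scheme [:: 0; 1; 2; 3] [:: 0; 1; 2; 3; 4].

Definition pattern4 : pred (nat * nat) :=
  fun c => c \in [:: (0,0); (0,1); (0,4); (2,2); (2,3); (2,4); (4,0); (4,1); (4,4)].

Definition scheme8 (five : bool) : scheme :=
  Scheme (iota 0 8) (if five then [:: 0; 1; 2; 3; 8] else [:: 0; 1; 2; 3; 4; 5; 6; 8; 9]).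

Definition pairing_table (five five' : bool) : seq (nat * nat * dir) :=
  match five, five' with
  | true, true =>
    [:: (0,4,Right); (0,5,Left); (0,8,Down); (1,2,Down); (1,7,Down); (1,8,Up);
        (2,2,Up); (2,7,Up); (2,8,Down); (3,4,Right); (3,5,Left); (3,8,Up);
        (4,0,Right); (4,1,Left); (5,3,Down); (5,6,Down); (6,3,Up); (6,6,Up);
        (7,0,Right); (7,1,Left); (8,0,Left); (8,1,Right); (8,2,Left); (8,7,Right);
        (8,8,Right)]
  | false, true =>
    [:: (0,4,Right); (0,5,Left); (0,8,Down); (1,2,Down); (1,7,Down); (1,8,Up);
        (2,2,Up); (2,7,Up); (2,8,Down); (3,4,Right); (3,5,Left); (3,8,Up);
        (4,0,Right); (4,1,Left); (5,3,Down); (5,6,Down); (6,3,Up); (6,6,Up);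
        (7,0,Right); (7,1,Left); (8,0,Down); (8,1,Down); (8,8,Down); (9,0,Up);
        (9,1,Up); (9,4,Right); (9,5,Left); (9,8,Up)]
  | true, false =>
    [:: (0,4,Right); (0,5,Left); (1,2,Down); (1,7,Down); (1,8,Down); (1,9,Down);
        (2,2,Up); (2,7,Up); (2,8,Up); (2,9,Up); (3,4,Right); (3,5,Left);
        (4,0,Right); (4,1,Left); (5,3,Down); (5,6,Down); (5,8,Down); (6,3,Up);
        (6,6,Up); (6,8,Up); (7,0,Right); (7,1,Left); (8,0,Right); (8,1,Left);
        (8,4,Right); (8,5,Left); (8,8,Right); (8,9,Left)]
  | false, false =>
    [:: (0,4,Right); (0,5,Left); (1,2,Down); (1,7,Down); (1,8,Down); (1,9,Down);
        (2,2,Up); (2,7,Up); (2,8,Up); (2,9,Up); (3,4,Right); (3,5,Left);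
        (4,0,Right); (4,1,Left); (5,3,Down); (5,6,Down); (5,8,Down); (6,3,Up);
        (6,6,Up); (6,8,Up); (7,0,Right); (7,1,Left); (8,0,Down); (8,1,Down);
        (9,0,Up); (9,1,Up); (9,4,Right); (9,5,Left); (9,8,Right); (9,9,Left)]
  end.

Lemma gamma_t_scheme4 q q' :
  4 * gamma_t (CnCm_adj (size (word scheme4 q)) (size (word scheme4 q')))
    <= (size (word scheme4 q) + 1) * (size (word scheme4 q') + 1).
Proof.
have ok4 : scheme_ok scheme4 by vm_compute.
have chk : domination_check scheme4 scheme4 false pattern4 by vm_compute.
apply: leq_trans (leq_mul (leqnn 4) (gamma_t_word q q' ok4 ok4 chk)) _.
rewrite weight_word !size_word /weight unlock /=; nia.
Qed.

Lemma gamma_p_scheme8 five five' q q' :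
  4 * gamma_p (CnCm_adj (size (word (scheme8 five) q)) (size (word (scheme8 five') q')))
    <= (size (word (scheme8 five) q) + 1) * (size (word (scheme8 five') q') + 1) + 4.
Proof.
have ok8 b : scheme_ok (scheme8 b) by case: b; vm_compute.
have gt1 b r : 1 < size (word (scheme8 b) r) by rewrite size_word; case: b => /=; lia.
have chk b b' : domination_check (scheme8 b) (scheme8 b') true (in_table (pairing_table b b')).
  by case: b; case: b'; vm_compute.
have pair_chk b b' : pairing_check (scheme8 b) (scheme8 b') (pairing_table b b').
  by case: b; case: b'; vm_compute.
have := gamma_p_word (ok8 five) (ok8 five') (gt1 _ q) (gt1 _ q') (chk _ _) (pair_chk _ _).
move/(leq_mul (leqnn 4))/leq_trans; apply.
rewrite weight_word !size_word.
by case: five; case: five'; rewrite /weight unlock /=; nia.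
Qed.

Lemma word_scheme4 n : 5 <= n -> n %% 4 = 1 -> exists q, n = size (word scheme4 q).
Proof. by move=> n5 n4; exists (n %/ 4 - 1); rewrite size_word /=; lia. Qed.

Lemma word_scheme8 n : 5 <= n -> n %% 4 = 1 -> exists five q, n = size (word (scheme8 five) q).
Proof.
move=> n5 n4; exists (n %% 8 == 5).
by case: eqP => h8; [exists (n %/ 8) | exists (n %/ 8 - 1)]; rewrite size_word /=; lia.
Qed.

Theorem theorem5p3 (n m : nat) :
  5 <= n -> 5 <= m -> n %% 4 = 1 -> m %% 4 = 1 ->
  4 * gamma_t (CnCm_adj n m) <= (n + 1) * (m + 1) /\
  4 * gamma_p (CnCm_adj n m) <= (n + 1) * (m + 1) + 4.
Proof.
move=> n5 m5 n4 m4; split.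
- have [q ->] := word_scheme4 n5 n4; have [q' ->] := word_scheme4 m5 m4.
  exact: gamma_t_scheme4.
- have [five [q ->]] := word_scheme8 n5 n4; have [five' [q' ->]] := word_scheme8 m5 m4.
  exact: gamma_p_scheme8.
Qed.
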